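(* Let $H$ and $K$ be finite-dimensional complex Hilbert spaces, let $A\subseteq B(H)$ be a real operator system (a real linear subspace of the self-adjoint operators in $B(H)$ with $1\in A$), and let $\mathcal{C}$ be a mapping cone on $K$. Let $\phi: A\to B(K)$ be a real-linear map that is $\mathcal{C}$-positive. Then there exists a $\mathcal{C}$-positive linear map $\psi: B(H)\to B(K)$ such that $\psi(a)=\phi(a)$ for all $a\in A$.
   Context: A mapping cone $\mathcal{C}$ on $K$ is a closed convex cone of positive linear maps $B(K)\to B(K)$ such that $\alpha\in\mathcal{C}$ implies $\beta\circ\alpha\circ\gamma\in\mathcal{C}$ for all completely positive maps $\beta,\gamma: B(K)\to B(K)$. Fix an orthonormal basis of $K$ and let $b^t$ denote the transpose of $b\in B(K)$ with respect to it; $Tr$ is the usual trace. For a real or complex linear subspace $A\subseteq B(H)$ containing $1$, let $A\otimes B(K)\subseteq B(H)\otimes B(K)=B(H\otimes K)$ denote the linear span of $\{a\otimes b: a\in A, b\in B(K)\}$. For a (real-)linear map $\phi: A\to B(K)$, its dual functional $\tilde\phi$ is the linear functional on $A\otimes B(K)$ determined by $\tilde\phi(a\otimes b)=Tr(\phi(a)b^t)$. Define $P(A,\mathcal{C})=\{x\in (A\otimes B(K))_{sa} : (\iota\otimes\alpha)(x)\ge 0 \text{ for all } \alpha\in\mathcal{C}\}$, where $\iota$ is the identity map on $B(H)$ and $(\cdot)_{sa}$ denotes self-adjoint elements. The map $\phi$ is called $\mathcal{C}$-positive if $\tilde\phi(x)\ge 0$ for all $x\in P(A,\mathcal{C})$.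 (For $A=B(H)$ this applies to maps $\psi: B(H)\to B(K)$.) *)

(* H = C^n, K = C^m, B(H) = 'M[R[i]]_n, B(K) = 'M[R[i]]_m,
   B(H) (x) B(K) = B(H (x) K) = 'M_(n * m) via [mxtens] indexing. *)
From HB Require Import structures.
From mathcomp Require Import all_boot all_order all_algebra.
From mathcomp Require Import complex mxtens reals.

Set Implicit Arguments.
Unset Strict Implicit.
Unset Printing Implicit Defensive.

Import Order.TTheory GRing.Theory Num.Theory.
Local Open Scope ring_scope.
Local Open Scope complex_scope.

Section Defs.
Variable R : realType.
Local Notation C := R[i].

Definition adjmx p q (X : 'M[C]_(p, q)) : 'M[C]_(q, p) := (map_mx Num.conj X)^T.

Definition selfadj p (X : 'M[C]_p) : Prop := adjmx X = X.

Definition psd p (X : 'M[C]_p) : Prop :=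
  selfadj X /\ forall v : 'cV[C]_p, 0 <= (adjmx v *m X *m v) 0 0.

Definition clinear p q (f : 'M[C]_p -> 'M[C]_q) : Prop :=
  forall (c : C) (X Y : 'M[C]_p), f (c *: X + Y) = c *: f X + f Y.

Definition posmap p q (f : 'M[C]_p -> 'M[C]_q) : Prop :=
  forall X, psd X -> psd (f X).

Definition blockmx k m (x : 'M[C]_(k * m)) (i1 j1 : 'I_k) : 'M[C]_m :=
  \matrix_(i2, j2) x (mxtens_index (i1, i2)) (mxtens_index (j1, j2)).

(* the ampliation iota_k (x) alpha : B(C^k (x) C^m) -> B(C^k (x) C^m),
   i.e. alpha applied blockwise; (iota (x) alpha)(a *t b) = a *t alpha b *)
Definition ampl k m (alpha : 'M[C]_m -> 'M[C]_m) (x : 'M[C]_(k * m))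
  : 'M[C]_(k * m) :=
  \matrix_(i, j) alpha (blockmx x (mxtens_unindex i).1 (mxtens_unindex j).1)
                   (mxtens_unindex i).2 (mxtens_unindex j).2.

Definition cpmap m (f : 'M[C]_m -> 'M[C]_m) : Prop :=
  clinear f /\ forall k, posmap (@ampl k m f).

Definition cvgC (s : nat -> C) (l : C) : Prop :=
  forall e : R, 0 < e -> exists N : nat, forall t, (N <= t)%N -> `|s t - l| < e%:C.

(* mapping cone on K = C^m: a closed convex cone of positive linear maps
   B(K) -> B(K), invariant under composition with completely positive maps.
   (Closedness is w.r.t. the (unique) vector space topology of the
   finite-dimensional space of linear maps, i.e. pointwise convergence.) *)
Definition mapping_cone m (Cn : ('M[C]_m -> 'M[C]_m) -> Prop) : Prop :=
  [/\ (forall alpha, Cn alpha -> clinear alpha /\ posmap alpha),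
      (forall alpha beta, Cn alpha -> Cn beta -> Cn (fun X => alpha X + beta X)),
      (forall (t : R) alpha, 0 <= t -> Cn alpha -> Cn (fun X => t%:C *: alpha X)),
      (forall (u : nat -> 'M[C]_m -> 'M[C]_m) (alpha : 'M[C]_m -> 'M[C]_m),
          (forall t, Cn (u t)) ->
          (forall X i j, cvgC (fun t => u t X i j) (alpha X i j)) ->
          Cn alpha) &
      (forall alpha beta gamma, Cn alpha -> cpmap beta -> cpmap gamma ->
          Cn (beta \o alpha \o gamma))].

Definition real_opsys n (A : 'M[C]_n -> Prop) : Prop :=
  [/\ forall a, A a -> selfadj a,
      A 1%:M,
      (forall a b, A a -> A b -> A (a + b)) &
      (forall (t : R) a, A a -> A (t%:C *: a))].

Definition rlinear_on n m (A : 'M[C]_n -> Prop) (phi : 'M[C]_n -> 'M[C]_m) : Prop :=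
  (forall a b, A a -> A b -> phi (a + b) = phi a + phi b) /\
  (forall (t : R) a, A a -> phi (t%:C *: a) = t%:C *: phi a).

(* P(A, C): self-adjoint x in A (x) B(K) with (iota (x) alpha)(x) >= 0 for all
   alpha in C.  An element of A (x) B(K) is given as a finite sum
   x = \sum_i a_i *t b_i with a_i in A, b_i in B(K). *)
Definition in_PAC n m (Cn : ('M[C]_m -> 'M[C]_m) -> Prop) (x : 'M[C]_(n * m)) : Prop :=
  selfadj x /\ forall alpha, Cn alpha -> psd (ampl alpha x).

(* phi is C-positive: its dual functional
     tilde phi (\sum_i a_i (x) b_i) = \sum_i Tr (phi(a_i) b_i^t)
   is nonnegative on P(A, C). *)
Definition Cpositive n m (A : 'M[C]_n -> Prop) (Cn : ('M[C]_m -> 'M[C]_m) -> Prop)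
    (phi : 'M[C]_n -> 'M[C]_m) : Prop :=
  forall (k : nat) (a : 'I_k -> 'M[C]_n) (b : 'I_k -> 'M[C]_m),
    (forall i, A (a i)) ->
    in_PAC Cn (\sum_(i < k) (a i *t b i)) ->
    0 <= \sum_(i < k) \tr (phi (a i) *m (b i)^T).

End Defs.

(* Krein's extension theorem in disguise.  On the algebraic tensor product
   A (x) B(K), C-positivity of phi makes the dual functional well defined (two
   representations of the same tensor give a representation of 0, whose value
   is both >= 0 and <= 0), complex linear and positive on the cone P(A, C).  The
   identity is an order unit for P(A, C): each block of (iota (x) alpha)(x) is
   bounded by multiples of alpha(1), uniformly in the positive map alpha.
   Pulling P(A, C) back along the Hermitian part x |-> (x + x^* )/2 gives a cone
   in all of B(H (x) K) with order unit 1, so the real part of the dual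
   functional extends, one real dimension at a time (the new value is squeezed
   between a sup and an inf), to a positive real functional g on the whole
   space.  Its complexification f x = g x - i g (i x) is positive on P(A, C),
   and the map psi(a)_pq = f (a (x) e_pq) dual to f extends phi. *)

From HB Require Import structures.
From mathcomp Require Import all_boot all_order all_algebra.
From mathcomp Require Import complex mxtens reals.
From mathcomp Require Import ring lra.
From mathcomp Require Import boolp classical_sets.
From Stdlib Require Import ClassicalEpsilon.
Import Order.TTheory GRing.Theory Num.Theory.
Local Open Scope ring_scope.
Local Open Scope complex_scope.
Set Implicit Arguments.
Unset Strict Implicit.
Unset Printing Implicit Defensive.

Lemma ler_sum_term (F : numDomainType) (I : finType) (G : I -> F) i :
  (forall j, 0 <= G j) -> G i <= \sum_j G j.
Proof. by move=> G0; rewrite (bigD1 i) //= lerDl sumr_ge0. Qed.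

Lemma sum_mxtens (V : nmodType) n m (F : 'I_(n * m) -> V) :
  \sum_k F k = \sum_(i < n) \sum_(p < m) F (mxtens_index (i, p)).
Proof.
rewrite pair_big (reindex (@mxtens_index n m)) /=; first by apply: eq_bigr => -[].
by exists (@mxtens_unindex n m) => k _; rewrite (mxtens_indexK, mxtens_unindexK).
Qed.

Section TensorProduct.
Variables (K : comPzRingType) (m1 n1 m2 n2 : nat).
Implicit Types (a : 'M[K]_(m1, n1)) (b : 'M[K]_(m2, n2)).

Lemma tensmxDl a a' b : (a + a') *t b = a *t b + a' *t b.
Proof. by apply/matrixP=> i j; rewrite !mxE mulrDl. Qed.

Lemma tensmxZl c a b : (c *: a) *t b = c *: (a *t b).
Proof. by apply/matrixP=> i j; rewrite !mxE mulrA. Qed.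

Lemma tensmxDr a b b' : a *t (b + b') = a *t b + a *t b'.
Proof. by apply/matrixP=> i j; rewrite !mxE mulrDr. Qed.

Lemma tensmxZr c a b : a *t (c *: b) = c *: (a *t b).
Proof. by apply/matrixP=> i j; rewrite !mxE mulrCA. Qed.

Lemma tensmx_sumr a I (r : seq I) (P : pred I) (F : I -> 'M[K]_(m2, n2)) :
  a *t (\sum_(i <- r | P i) F i) = \sum_(i <- r | P i) a *t F i.
Proof. exact: (big_morph _ (tensmxDr a) (tensmx0 a)). Qed.

Lemma tensmx_delta a b : a *t b = \sum_i \sum_j b i j *: (a *t delta_mx i j).
Proof.
rewrite {1}(matrix_sum_delta b) tensmx_sumr; apply: eq_bigr => i _.
by rewrite tensmx_sumr; apply: eq_bigr => j _; rewrite tensmxZr.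
Qed.

End TensorProduct.

Lemma tensmx11 (K : pzRingType) n m : (1%:M : 'M[K]_n) *t (1%:M : 'M[K]_m) = 1%:M.
Proof.
apply/matrixP=> i j; case: (mxtens_indexP i) => i1 i2; case: (mxtens_indexP j) => j1 j2.
rewrite tensmxE !mxE (inj_eq (can_inj (@mxtens_indexK n m))) xpair_eqE.
by case: (i1 == j1); case: (i2 == j2); rewrite ?mulr1 ?mulr0 ?mul0r.
Qed.

Lemma trace_mulmx_delta (K : pzSemiRingType) p (M : 'M[K]_p) i j :
  \tr (M *m (delta_mx i j)^T) = M i j.
Proof.
rewrite /mxtrace (bigD1 i) //= big1 => [|k /negPf ki]; last first.
  by rewrite mxE big1 // => l _; rewrite !mxE ki mulr0.
rewrite mxE (bigD1 j) //= big1 => [|l /negPf lj]; last by rewrite !mxE lj andbF mulr0.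
by rewrite !mxE !eqxx mulr1 !addr0.
Qed.

Section KreinExtension.
Variable R : realType.
Local Notation C := R[i].
Variables p q : nat.
Local Notation V := 'M[C]_(p, q).
Variables (Q : V -> Prop) (e : V).
Hypothesis QD : forall x y, Q x -> Q y -> Q (x + y).
Hypothesis QZ : forall (t : R) x, 0 <= t -> Q x -> Q (t%:C *: x).
Hypothesis Qe : forall v, exists l : R, Q (l%:C *: e - v).

Record pos_functional (W : V -> Prop) (g : V -> R) : Prop := PosFunctional {
  pf_unit : W e;
  pf_subD : forall x y, W x -> W y -> W (x + y);
  pf_subZ : forall (t : R) x, W x -> W (t%:C *: x);
  pf_linD : forall x y, W x -> W y -> g (x + y) = g x + g y;
  pf_linZ : forall (t : R) x, W x -> g (t%:C *: x) = t * g x;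
  pf_ge0 : forall x, W x -> Q x -> 0 <= g x }.

Definition extends (W : V -> Prop) (g : V -> R) (W' : V -> Prop) (g' : V -> R) :=
  forall x, W x -> W' x /\ g' x = g x.

Section PosFunctionalTheory.
Variables (W : V -> Prop) (g : V -> R).
Hypothesis Wg : pos_functional W g.

Lemma pf_subN x : W x -> W (- x).
Proof. by move=> Wx; have := pf_subZ Wg (-1) Wx; rewrite rmorphN1 scaleN1r. Qed.

Lemma pf_subB x y : W x -> W y -> W (x - y).
Proof. by move=> Wx Wy; apply: (pf_subD Wg) => //; apply: pf_subN. Qed.

Lemma pf_sub0 : W 0.
Proof. by rewrite -(subrr e); apply: pf_subB (pf_unit Wg) (pf_unit Wg). Qed.

Lemma pf_linB x y : W x -> W y -> g (x - y) = g x - g y.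
Proof.
move=> Wx Wy; rewrite (pf_linD Wg) //; last exact: pf_subN.
by have := pf_linZ Wg (-1) Wy; rewrite rmorphN1 scaleN1r mulN1r => ->.
Qed.

Lemma pf_mono x y : W x -> W y -> Q (y - x) -> g x <= g y.
Proof.
by move=> Wx Wy Qyx; rewrite -subr_ge0 -pf_linB //; apply: (pf_ge0 Wg) => //; apply: pf_subB.
Qed.

(* Any c in this gap is a value at v that keeps the extension positive. *)
Lemma pf_gap v : exists c : R,
  (forall w, W w -> Q (v - w) -> g w <= c) /\ (forall w, W w -> Q (w - v) -> c <= g w).
Proof.
pose L : set R := fun r => exists2 w, W w /\ Q (v - w) & r = g w.
have L_le w : W w -> Q (w - v) -> ubound L (g w).
  move=> Ww Qwv _ [w' [Ww' Qvw'] ->]; apply: pf_mono => //.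
  by have := QD Qwv Qvw'; rewrite addrA subrK.
have [l1 Q1] := Qe (- v); have [l2 Q2] := Qe v.
have W1 : W ((- l1)%:C *: e) by apply: (pf_subZ Wg) (pf_unit Wg).
have W2 : W (l2%:C *: e) by apply: (pf_subZ Wg) (pf_unit Wg).
have L0 : L (g ((- l1)%:C *: e)).
  exists ((- l1)%:C *: e) => //; split => //.
  by rewrite rmorphN scaleNr opprK addrC; rewrite opprK in Q1.
exists (sup L); split=> [w Ww Qvw | w Ww Qwv].
  apply: sup_upper_bound; last by exists w.
  by split; [exists (g ((- l1)%:C *: e)) | exists (g (l2%:C *: e)); apply: L_le].
by apply: ge_sup; [exists (g ((- l1)%:C *: e)) | apply: L_le].
Qed.

Section Adjoin.
Variable v : V.
Hypothesis Wv : ~ W v.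

Definition adjoin (x : V) := exists w (t : R), W w /\ x = w + t%:C *: v.

Lemma adjoin_uniq w1 w2 (t1 t2 : R) : W w1 -> W w2 ->
  w1 + t1%:C *: v = w2 + t2%:C *: v -> w1 = w2 /\ t1 = t2.
Proof.
move=> Ww1 Ww2 e12.
have e21 : w2 - w1 = (t1 - t2)%:C *: v.
  rewrite rmorphB scalerBl -(addrKA w1 (t1%:C *: v) (t2%:C *: v)).
  by rewrite [t1%:C *: v + w1]addrC e12 opprD addrACA subrr addr0.
have t12 : t1 = t2.
  apply/eqP; rewrite -subr_eq0; apply/negPn/negP => t12; apply: Wv.
  have -> : v = ((t1 - t2)^-1)%:C *: (w2 - w1).
    by rewrite e21 scalerA -rmorphM mulVf // rmorph1 scale1r.
  exact/(pf_subZ Wg)/pf_subB.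
by move: e12; rewrite t12 => /addIr.
Qed.

Variable c : R.

(* Only meaningful on [adjoin], where the decomposition is unique. *)
Definition adjoin_fun (x : V) : R :=
  let wt := epsilon (inhabits (0, 0))
    (fun wt : V * R => W wt.1 /\ x = wt.1 + wt.2%:C *: v) in
  g wt.1 + wt.2 * c.

Lemma adjoin_funE w t : W w -> adjoin_fun (w + t%:C *: v) = g w + t * c.
Proof.
move=> Ww; rewrite /adjoin_fun; set P := fun wt : V * R => _.
have := epsilon_spec (inhabits (0, 0)) P (ex_intro _ (w, t) (conj Ww erefl)).
case: (epsilon _ P) => w' t' [/= Ww' e'].
by have [-> ->] := adjoin_uniq Ww Ww' e'.
Qed.

Hypothesis c_lb : forall w, W w -> Q (v - w) -> g w <= c.
Hypothesis c_ub : forall w, W w -> Q (w - v) -> c <= g w.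

Lemma adjoin_fun_ge0 w (t : R) : W w -> Q (w + t%:C *: v) -> 0 <= g w + t * c.
Proof.
move=> Ww Qx; have [t_lt0|t_gt0|t0] := ltrgtP t 0; last first.
- by move: Qx; rewrite t0 raddf0 scale0r !addr0 mul0r addr0; apply: (pf_ge0 Wg).
- have s_gt0 : 0 < t^-1 by rewrite invr_gt0.
  have := c_lb (pf_subZ Wg (- t^-1) Ww).
  have -> : v - (- t^-1)%:C *: w = (t^-1)%:C *: (w + t%:C *: v).
    rewrite rmorphN scaleNr opprK addrC scalerDr scalerA -rmorphM.
    by rewrite mulVf ?lt0r_neq0 // rmorph1 scale1r.
  move=> /(_ (QZ (ltW s_gt0) Qx)); rewrite (pf_linZ Wg) // mulNr.
  rewrite -(ler_pM2l t_gt0) mulrN mulrA mulfV ?lt0r_neq0 // mul1r; lra.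
- have s_gt0 : 0 < (- t)^-1 by rewrite invr_gt0 oppr_gt0.
  have := c_ub (pf_subZ Wg ((- t)^-1) Ww).
  have -> : ((- t)^-1)%:C *: w - v = ((- t)^-1)%:C *: (w + t%:C *: v).
    rewrite scalerDr scalerA -rmorphM invrN mulNr.
    by rewrite mulVf ?ltr0_neq0 // rmorphN1 scaleN1r.
  have nt_gt0 : 0 < - t by rewrite oppr_gt0.
  move=> /(_ (QZ (ltW s_gt0) Qx)); rewrite (pf_linZ Wg) //.
  rewrite -(ler_pM2l nt_gt0) mulrA mulfV ?lt0r_neq0 // mul1r; lra.
Qed.

Lemma pos_functional_adjoin : pos_functional adjoin adjoin_fun.
Proof.
have [W1 WD WZ gD gZ gP] := Wg.
split.
- by exists e, 0; rewrite raddf0 scale0r addr0.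
- move=> _ _ [w1 [t1 [Ww1 ->]]] [w2 [t2 [Ww2 ->]]].
  by exists (w1 + w2), (t1 + t2); rewrite rmorphD scalerDl addrACA; split => //; apply: WD.
- move=> s _ [w [t [Ww ->]]]; exists (s%:C *: w), (s * t); split; first exact: WZ.
  by rewrite scalerDr rmorphM scalerA.
- move=> _ _ [w1 [t1 [Ww1 ->]]] [w2 [t2 [Ww2 ->]]].
  by rewrite addrACA -scalerDl -rmorphD !adjoin_funE ?gD //; [lra | apply: WD].
- move=> s _ [w [t [Ww ->]]].
  by rewrite scalerDr scalerA -rmorphM !adjoin_funE ?gZ //; [lra | apply: WZ].
- by move=> _ [w [t [Ww ->]]] Qx; rewrite adjoin_funE //; apply: adjoin_fun_ge0.
Qed.

Lemma adjoin_extends : extends W g adjoin adjoin_fun.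
Proof.
move=> x Wx; have := adjoin_funE 0 Wx; rewrite raddf0 scale0r addr0 mul0r addr0.
by split=> //; exists x, 0; rewrite raddf0 scale0r addr0.
Qed.

Lemma adjoin_vec : adjoin v.
Proof. by exists 0, 1; rewrite rmorph1 scale1r add0r; split=> //; apply: pf_sub0. Qed.

End Adjoin.

End PosFunctionalTheory.

Lemma pos_functional_extend1 W g v : pos_functional W g ->
  exists W' g', [/\ pos_functional W' g', extends W g W' g' & W' v].
Proof.
move=> Wg; have [Wv|Wv] := pselect (W v); first by exists W, g.
have [c [c_lb c_ub]] := pf_gap Wg v.
exists (adjoin W v), (adjoin_fun W g v c); split.
- exact: pos_functional_adjoin.
- exact: adjoin_extends.
- exact: (adjoin_vec Wg v).
Qed.

Lemma pos_functional_extend_seq (s : seq V) W g : pos_functional W g ->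
  exists W' g', [/\ pos_functional W' g', extends W g W' g' & {in s, forall v, W' v}].
Proof.
elim: s W g => [|v s IHs] W g Wg; first by exists W, g.
have [W1 [g1 [Wg1 ext1 W1v]]] := pos_functional_extend1 v Wg.
have [W2 [g2 [Wg2 ext2 W2s]]] := IHs _ _ Wg1.
exists W2, g2; split=> // [x Wx|u].
  by have [W1x <-] := ext1 x Wx; apply: ext2.
by rewrite in_cons => /predU1P[->|/W2s//]; apply: (ext2 v W1v).1.
Qed.

Lemma mx_real_spanning (W : V -> Prop) : W 0 ->
  (forall x y, W x -> W y -> W (x + y)) -> (forall (t : R) x, W x -> W (t%:C *: x)) ->
  (forall i j, W (delta_mx i j) /\ W ('i *: delta_mx i j)) -> forall x, W x.
Proof.
move=> W0 WD WZ Wdelta x; rewrite (matrix_sum_delta x).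
apply: (big_ind W) => // i _; apply: (big_ind W) => // j _.
rewrite [x i j]complexE scalerDl mulrC -scalerA.
by have [W1 Wi] := Wdelta i j; apply: WD; apply: WZ.
Qed.

Theorem krein_extension W g : pos_functional W g -> exists g' : V -> R,
  [/\ forall x, W x -> g' x = g x, forall x y, g' (x + y) = g' x + g' y,
      forall (t : R) x, g' (t%:C *: x) = t * g' x & forall x, Q x -> 0 <= g' x].
Proof.
pose s : seq V := [seq delta_mx i j | i <- enum 'I_p, j <- enum 'I_q] ++
                  [seq 'i%C *: delta_mx i j | i <- enum 'I_p, j <- enum 'I_q].
move=> /(pos_functional_extend_seq s)[W' [g' [Wg' ext Ws]]].
have W'T : forall x, W' x.
  apply: mx_real_spanning (pf_sub0 Wg') (pf_subD Wg') (pf_subZ Wg') _ => i j.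
  have mem_s (f : 'I_p -> 'I_q -> V) : f i j \in [seq f i j | i <- enum 'I_p, j <- enum 'I_q].
    by apply: allpairs_f; rewrite mem_enum.
  split; apply: Ws; first by rewrite mem_cat (mem_s (@delta_mx _ p q)).
  by rewrite mem_cat (mem_s (fun i j => 'i%C *: delta_mx i j)) orbT.
exists g'; split=> [x /ext[] //|x y|t x|x].
- exact: (pf_linD Wg' (W'T x) (W'T y)).
- exact: (pf_linZ Wg' t (W'T x)).
- exact: (pf_ge0 Wg' (W'T x)).
Qed.

End KreinExtension.

Section Adjoint.
Variable R : realType.
Local Notation C := R[i].
Local Notation cj := (@Num.conj C).

Lemma conjCr (t : R) : cj t%:C = t%:C.
Proof. exact: conjc_real. Qed.

Lemma adjmxE p q (X : 'M[C]_(p, q)) i j : adjmx X i j = cj (X j i).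
Proof. by rewrite !mxE. Qed.

Lemma adjmxD p q (X Y : 'M[C]_(p, q)) : adjmx (X + Y) = adjmx X + adjmx Y.
Proof. by rewrite /adjmx map_mxD linearD. Qed.

Lemma adjmxN p q (X : 'M[C]_(p, q)) : adjmx (- X) = - adjmx X.
Proof. by rewrite /adjmx map_mxN linearN. Qed.

Lemma adjmx0 p q : adjmx (0 : 'M[C]_(p, q)) = 0.
Proof. by rewrite /adjmx map_mx0 linear0. Qed.

Lemma adjmxZ p q (c : C) (X : 'M[C]_(p, q)) : adjmx (c *: X) = cj c *: adjmx X.
Proof. by rewrite /adjmx map_mxZ linearZ. Qed.

Lemma adjmxK p q (X : 'M[C]_(p, q)) : adjmx (adjmx X) = X.
Proof. by apply/matrixP=> i j; rewrite !mxE conjCK. Qed.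

Lemma adjmxM p q r (X : 'M[C]_(p, q)) (Y : 'M[C]_(q, r)) :
  adjmx (X *m Y) = adjmx Y *m adjmx X.
Proof. by rewrite /adjmx map_mxM trmx_mul. Qed.

Lemma adjmx1 p : adjmx (1%:M : 'M[C]_p) = 1%:M.
Proof. by rewrite /adjmx map_mx1 trmx1. Qed.

Lemma adjmx_sum p q I (r : seq I) (P : pred I) (F : I -> 'M[C]_(p, q)) :
  adjmx (\sum_(i <- r | P i) F i) = \sum_(i <- r | P i) adjmx (F i).
Proof. exact: (big_morph _ (@adjmxD p q) (@adjmx0 p q)). Qed.

Lemma adjmx_tens p q p' q' (a : 'M[C]_(p, q)) (b : 'M[C]_(p', q')) :
  adjmx (a *t b) = adjmx a *t adjmx b.
Proof. by apply/matrixP=> i j; rewrite !mxE rmorphM. Qed.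

Lemma selfadj0 p : selfadj (0 : 'M[C]_p).
Proof. exact: adjmx0. Qed.

Lemma selfadj1 p : selfadj (1%:M : 'M[C]_p).
Proof. exact: adjmx1. Qed.

Lemma selfadjD p (X Y : 'M[C]_p) : selfadj X -> selfadj Y -> selfadj (X + Y).
Proof. by rewrite /selfadj adjmxD => -> ->. Qed.

Lemma selfadjN p (X : 'M[C]_p) : selfadj X -> selfadj (- X).
Proof. by rewrite /selfadj adjmxN => ->. Qed.

Lemma selfadjB p (X Y : 'M[C]_p) : selfadj X -> selfadj Y -> selfadj (X - Y).
Proof. by move=> sX sY; apply/selfadjD/selfadjN. Qed.

Lemma selfadjZ p (t : R) (X : 'M[C]_p) : selfadj X -> selfadj (t%:C *: X).
Proof. by rewrite /selfadj adjmxZ conjCr => ->. Qed.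

End Adjoint.

Section Forms.
Variable R : realType.
Local Notation C := R[i].
Local Notation cj := (@Num.conj C).

Definition mxform p (X : 'M[C]_p) (u w : 'cV[C]_p) : C := (adjmx u *m X *m w) 0 0.

Lemma mxformE p (X : 'M[C]_p) u w :
  mxform X u w = \sum_i \sum_j cj (u i 0) * X i j * w j 0.
Proof.
rewrite /mxform !mxE exchange_big /=; apply: eq_bigr => j _.
by rewrite !mxE mulr_suml; apply: eq_bigr => i _; rewrite !mxE.
Qed.

Lemma mxformDx p (X Y : 'M[C]_p) u w : mxform (X + Y) u w = mxform X u w + mxform Y u w.
Proof. by rewrite /mxform mulmxDr mulmxDl mxE. Qed.

Lemma mxformZx p (c : C) (X : 'M[C]_p) u w : mxform (c *: X) u w = c * mxform X u w.
Proof. by rewrite /mxform -scalemxAr -scalemxAl mxE. Qed.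

Lemma mxformNx p (X : 'M[C]_p) u w : mxform (- X) u w = - mxform X u w.
Proof. by rewrite -scaleN1r mxformZx mulN1r. Qed.

Lemma mxformBx p (X Y : 'M[C]_p) u w : mxform (X - Y) u w = mxform X u w - mxform Y u w.
Proof. by rewrite mxformDx mxformNx. Qed.

Lemma mxformMnx p (X : 'M[C]_p) u w k : mxform (X *+ k) u w = mxform X u w *+ k.
Proof. by rewrite -scaler_nat mxformZx mulr_natl. Qed.

Lemma mxform0x p (u w : 'cV[C]_p) : mxform 0 u w = 0.
Proof. by rewrite /mxform mulmx0 mul0mx mxE. Qed.

Lemma mxformDl p (X : 'M[C]_p) u u' w : mxform X (u + u') w = mxform X u w + mxform X u' w.
Proof. by rewrite /mxform adjmxD !mulmxDl mxE. Qed.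

Lemma mxformDr p (X : 'M[C]_p) u w w' : mxform X u (w + w') = mxform X u w + mxform X u w'.
Proof. by rewrite /mxform mulmxDr mxE. Qed.

Lemma mxformZl p (X : 'M[C]_p) u w c : mxform X (c *: u) w = cj c * mxform X u w.
Proof. by rewrite /mxform adjmxZ -!scalemxAl mxE. Qed.

Lemma mxformZr p (X : 'M[C]_p) u w c : mxform X u (c *: w) = c * mxform X u w.
Proof. by rewrite /mxform -scalemxAr mxE. Qed.

Lemma conj_mxform p (X : 'M[C]_p) u w : cj (mxform X u w) = mxform (adjmx X) w u.
Proof. by rewrite /mxform -adjmxE !adjmxM adjmxK mulmxA. Qed.

Lemma selfadj_mxform_real p (X : 'M[C]_p) v : selfadj X -> mxform X v v \is Num.real.
Proof. by move=> sX; rewrite CrealE conj_mxform sX. Qed.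

Lemma psd_mxform_ge0 p (Z : 'M[C]_p) v : psd Z -> 0 <= mxform Z v v.
Proof. by case=> _; apply. Qed.

Lemma psd0 p : psd (0 : 'M[C]_p).
Proof. by split=> [|v]; [exact: selfadj0 | rewrite -/(mxform _ v v) mxform0x]. Qed.

Lemma psd1 p : psd (1%:M : 'M[C]_p).
Proof.
split=> [|v]; first exact: selfadj1.
rewrite -/(mxform _ v v) /mxform mulmx1 mxE sumr_ge0 // => i _.
by rewrite !mxE mulrC -normCK exprn_ge0.
Qed.

Lemma psdD p (X Y : 'M[C]_p) : psd X -> psd Y -> psd (X + Y).
Proof.
move=> [sX pX] [sY pY]; split=> [|v]; first exact: selfadjD.
by rewrite -/(mxform _ v v) mxformDx addr_ge0 ?pX ?pY.
Qed.

Lemma psdZ p (t : R) (X : 'M[C]_p) : 0 <= t -> psd X -> psd (t%:C *: X).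
Proof.
move=> t0 [sX pX]; split=> [|v]; first exact: selfadjZ.
by rewrite -/(mxform _ v v) mxformZx mulr_ge0 ?ler0c ?pX.
Qed.

Lemma mxform1E p (v : 'cV[C]_p) : mxform 1%:M v v = \sum_i `|v i 0| ^+ 2.
Proof. by rewrite /mxform mulmx1 mxE; apply: eq_bigr => i _; rewrite !mxE mulrC normCK. Qed.

Lemma normM_le_mxform1 p (v : 'cV[C]_p) i j : `|v i 0| * `|v j 0| <= mxform 1%:M v v.
Proof.
rewrite mxform1E; have sq_le k : `|v k 0| ^+ 2 <= \sum_l `|v l 0| ^+ 2.
  by apply: ler_sum_term => l; rewrite exprn_ge0.
case/orP: (real_leVge (normr_real (v i 0)) (normr_real (v j 0))) => [le_ij|le_ji].
  by apply: le_trans (sq_le j); rewrite expr2 ler_wpM2r.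
by apply: le_trans (sq_le i); rewrite expr2 ler_wpM2l.
Qed.

Lemma selfadj_order_bounded p (H : 'M[C]_p) : selfadj H ->
  exists c : R, [/\ 0 <= c, psd (c%:C *: 1%:M - H) & psd (c%:C *: 1%:M + H)].
Proof.
move=> sH; pose c := complex.Re (\sum_i \sum_j `|H i j|).
have S0 : 0 <= \sum_i \sum_j `|H i j| by rewrite sumr_ge0 // => i _; rewrite sumr_ge0.
have cE : c%:C = \sum_i \sum_j `|H i j|.
  by rewrite [RHS]complexE ger0_Im ?mulr0 ?addr0.
have bound v : `|mxform H v v| <= c%:C * mxform 1%:M v v.
  rewrite cE mulr_suml mxformE; apply: (le_trans (ler_norm_sum _ _ _)).
  apply: ler_sum => i _; rewrite mulr_suml; apply: (le_trans (ler_norm_sum _ _ _)).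
  apply: ler_sum => j _; rewrite !normrM norm_conjC mulrAC mulrC.
  by rewrite ler_wpM2l ?normM_le_mxform1.
have Hr v := selfadj_mxform_real v sH.
have sc1 : selfadj (c%:C *: 1%:M : 'M[C]_p) by apply/selfadjZ/selfadj1.
exists c; split; first by rewrite -lecR cE.
- split=> [|v]; first exact: selfadjB.
  rewrite -/(mxform _ v v) mxformBx mxformZx subr_ge0.
  by have := bound v; rewrite real_ler_norml // => /andP[].
- split=> [|v]; first exact: selfadjD.
  rewrite -/(mxform _ v v) mxformDx mxformZx -lerBlDr sub0r.
  by have := bound v; rewrite real_ler_norml // lerNl => /andP[].
Qed.

(* Positivity at u + c w, with |c| = 1 turning <u, Z w> onto the negative axis. *)
Lemma psd_mxform_norm_le p (Z : 'M[C]_p) u w : psd Z ->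
  `|mxform Z u w| *+ 2 <= mxform Z u u + mxform Z w w.
Proof.
move=> psdZ; have [sZ _] := psdZ; set b := mxform Z u w.
have [->|b0] := eqVneq b 0; first by rewrite normr0 mul0rn addr_ge0 ?psd_mxform_ge0.
pose c := - `|b| / b.
have cb : c * b = - `|b| by rewrite /c divfK.
have cc : cj c * c = 1.
  by rewrite -normCKC /c normrM normrN normfV normr_id divff ?expr1n ?normr_eq0.
have wu : mxform Z w u = cj b by rewrite /b conj_mxform sZ.
have cb' : cj c * cj b = - `|b|.
  by rewrite -rmorphM cb; apply/CrealP; rewrite realN normr_real.
have := psd_mxform_ge0 (u + c *: w) psdZ.
rewrite !mxformDl !mxformDr !mxformZl !mxformZr wu cb cb' mulrA cc mul1r => h.
by rewrite -subr_ge0; move: h; congr (0 <= _); ring.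
Qed.

Definition hpart p (X : 'M[C]_p) : 'M[C]_p := 2%:R^-1 *: (X + adjmx X).

Lemma conjCi : cj 'i = - 'i.
Proof. by apply/eqP; rewrite eq_complex /= oppr0 !eqxx. Qed.

Lemma hpart_selfadj p (X : 'M[C]_p) : selfadj (hpart X).
Proof. by rewrite /selfadj /hpart adjmxZ fmorphV rmorph_nat adjmxD adjmxK addrC. Qed.

Lemma hpartD p (X Y : 'M[C]_p) : hpart (X + Y) = hpart X + hpart Y.
Proof. by rewrite /hpart adjmxD -scalerDr addrACA. Qed.

Lemma hpartZ p (t : R) (X : 'M[C]_p) : hpart (t%:C *: X) = t%:C *: hpart X.
Proof. by rewrite /hpart adjmxZ conjCr -scalerDr !scalerA mulrC. Qed.

Lemma hpartN p (X : 'M[C]_p) : hpart (- X) = - hpart X.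
Proof. by rewrite /hpart adjmxN -opprD scalerN. Qed.

Lemma hpartB p (X Y : 'M[C]_p) : hpart (X - Y) = hpart X - hpart Y.
Proof. by rewrite hpartD hpartN. Qed.

Lemma hpart_id p (X : 'M[C]_p) : selfadj X -> hpart X = X.
Proof.
move=> sX; rewrite /hpart sX -mulr2n -[X *+ 2]scaler_nat scalerA mulVf ?scale1r //.
by rewrite pnatr_eq0.
Qed.

Lemma hpart_iZ p (X : 'M[C]_p) : selfadj X -> hpart ('i *: X) = 0.
Proof. by move=> sX; rewrite /hpart adjmxZ sX conjCi scaleNr subrr scaler0. Qed.

Lemma hpart_decomp p (X : 'M[C]_p) : X = hpart X + 'i *: hpart (- 'i *: X).
Proof.
apply/matrixP=> i j; rewrite !mxE rmorphM rmorphN /= conjCi.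
set z := X i j; set w := cj (X j i); set e := ('i%C : C).
have ee : e * e = -1 by rewrite /e -expr2 sqr_i.
have -> : e * (2%:R^-1 * (- e * z + - - e * w)) = 2%:R^-1 * (- (e * e) * z + (e * e) * w).
  by ring.
by rewrite ee; field.
Qed.

End Forms.

Section LinearMaps.
Variable R : realType.
Local Notation C := R[i].
Variables (p q : nat) (f : 'M[C]_p -> 'M[C]_q).
Hypothesis f_lin : clinear f.

Lemma clinear0 : f 0 = 0.
Proof. by apply: (addrI (f 0)); have := f_lin 1 0 0; rewrite !scale1r !addr0. Qed.

Lemma clinearD X Y : f (X + Y) = f X + f Y.
Proof. by have := f_lin 1 X Y; rewrite !scale1r. Qed.

Lemma clinearZ c X : f (c *: X) = c *: f X.
Proof. by rewrite -[c *: X]addr0 f_lin clinear0 addr0. Qed.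

Lemma clinearN X : f (- X) = - f X.
Proof. by rewrite -scaleN1r clinearZ scaleN1r. Qed.

Lemma clinearB X Y : f (X - Y) = f X - f Y.
Proof. by rewrite clinearD clinearN. Qed.

Hypothesis f_pos : posmap f.

Lemma posmap_psd1 : psd (f 1%:M).
Proof. exact/f_pos/psd1. Qed.

Lemma posmap_selfadj H : selfadj H -> selfadj (f H).
Proof.
move=> /selfadj_order_bounded[c [_ _ psdH]].
have [sfH _] := f_pos psdH; have [sf1 _] := posmap_psd1.
rewrite -[H](addKr (c%:C *: 1%:M)) addrC clinearB clinearZ.
exact: selfadjB sfH (selfadjZ c sf1).
Qed.

Lemma posmap_adj Y : f (adjmx Y) = adjmx (f Y).
Proof.
rewrite [Y]hpart_decomp; move: (hpart_selfadj Y) (hpart_selfadj (- 'i *: Y)).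
move: (hpart Y) (hpart (- 'i *: Y)) => H K sH sK.
have [sfH sfK] := (posmap_selfadj sH, posmap_selfadj sK).
rewrite adjmxD adjmxZ sH sK conjCi !(clinearD, clinearZ) adjmxD adjmxZ sfH sfK.
by rewrite conjCi.
Qed.

Lemma posmap_mxform_bound (c : R) H u w :
  psd (c%:C *: 1%:M - H) -> psd (c%:C *: 1%:M + H) ->
  `|mxform (f H) u w| *+ 2 <= c%:C * (mxform (f 1%:M) u u + mxform (f 1%:M) w w).
Proof.
move=> /f_pos psdM /f_pos psdP.
have fD : f (c%:C *: 1%:M + H) - f (c%:C *: 1%:M - H) = f H *+ 2.
  by rewrite clinearD clinearB opprB addrC addrA subrK mulr2n.
have fS : f (c%:C *: 1%:M + H) + f (c%:C *: 1%:M - H) = (c%:C *: f 1%:M) *+ 2.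
  by rewrite clinearD clinearB clinearZ addrACA subrr addr0 mulr2n.
rewrite -(ler_pMn2r (_ : 0 < 2)%N) // -normrMn -mxformMnx -fD mxformBx.
apply: le_trans (ler_wMn2r 2 (ler_normB _ _)) _; rewrite mulrnDl.
apply: le_trans (lerD (psd_mxform_norm_le u w psdP) (psd_mxform_norm_le u w psdM)) _.
by rewrite addrACA -!mxformDx fS !mxformMnx !mxformZx -mulrnDl -mulrDr.
Qed.

End LinearMaps.

Section PositiveMapBound.
Variable R : realType.
Local Notation C := R[i].

Lemma posmap_mxform_bound_uniform q (Y : 'M[C]_q) : exists c : R, 0 <= c /\
  forall f : 'M[C]_q -> 'M[C]_q, clinear f -> posmap f -> forall u w,
    `|mxform (f Y) u w| <= c%:C * (mxform (f 1%:M) u u + mxform (f 1%:M) w w).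
Proof.
have [cH [cH0 psdHm psdHp]] := selfadj_order_bounded (hpart_selfadj Y).
have [cK [cK0 psdKm psdKp]] := selfadj_order_bounded (hpart_selfadj (- 'i *: Y)).
exists (cH + cK); split=> [|f f_lin f_pos u w]; first exact: addr_ge0.
have le_norm_twice (z : C) : `|z| <= `|z| *+ 2 by rewrite mulr2n lerDr.
rewrite [Y]hpart_decomp.
move: (hpart Y) (hpart (- 'i *: Y)) psdHm psdHp psdKm psdKp.
move=> H K psdHm psdHp psdKm psdKp.
rewrite clinearD // clinearZ // mxformDx mxformZx rmorphD mulrDl.
apply: le_trans (ler_normD _ _) _; apply: lerD; rewrite ?normrM ?normCi ?mul1r.
  exact: le_trans (le_norm_twice _) (posmap_mxform_bound f_lin f_pos u w psdHm psdHp).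
exact: le_trans (le_norm_twice _) (posmap_mxform_bound f_lin f_pos u w psdKm psdKp).
Qed.

End PositiveMapBound.

Section Ampliation.
Variable R : realType.
Local Notation C := R[i].
Variables n m : nat.
Implicit Types (f : 'M[C]_m -> 'M[C]_m) (x y : 'M[C]_(n * m)).

Definition blockcv (u : 'cV[C]_(n * m)) (i : 'I_n) : 'cV[C]_m :=
  \col_p u (mxtens_index (i, p)) 0.

Lemma amplE f x i p j q :
  ampl f x (mxtens_index (i, p)) (mxtens_index (j, q)) = f (blockmx x i j) p q.
Proof. by rewrite mxE !mxtens_indexK. Qed.

Lemma mxform_ampl f x u :
  mxform (ampl f x) u u = \sum_i \sum_j mxform (f (blockmx x i j)) (blockcv u i) (blockcv u j).
Proof.
rewrite mxformE sum_mxtens; apply: eq_bigr => i _.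
under eq_bigr do rewrite sum_mxtens.
rewrite exchange_big /=; apply: eq_bigr => j _.
rewrite mxformE; apply: eq_bigr => p _; apply: eq_bigr => q _.
by rewrite amplE !mxE.
Qed.

Lemma blockmxD x y i j : blockmx (x + y) i j = blockmx x i j + blockmx y i j.
Proof. by apply/matrixP=> p q; rewrite !mxE. Qed.

Lemma blockmxZ c x i j : blockmx (c *: x) i j = c *: blockmx x i j.
Proof. by apply/matrixP=> p q; rewrite !mxE. Qed.

Lemma blockmx_adj x i j : blockmx (adjmx x) i j = adjmx (blockmx x j i).
Proof. by apply/matrixP=> p q; rewrite !mxE. Qed.

Lemma blockmx1 i j : blockmx (1%:M : 'M[C]_(n * m)) i j = (i == j)%:R *: 1%:M.
Proof.
apply/matrixP=> p q; rewrite !mxE (inj_eq (can_inj (@mxtens_indexK n m))).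
by rewrite xpair_eqE; case: (i == j); rewrite ?mul1r ?mul0r.
Qed.

Section LinearAmpliation.
Variable f : 'M[C]_m -> 'M[C]_m.
Hypothesis f_lin : clinear f.

Lemma amplD x y : ampl f (x + y) = ampl f x + ampl f y.
Proof. by apply/matrixP=> i j; rewrite !mxE blockmxD (clinearD f_lin) mxE. Qed.

Lemma amplZ c x : ampl f (c *: x) = c *: ampl f x.
Proof. by apply/matrixP=> i j; rewrite !mxE blockmxZ (clinearZ f_lin) mxE. Qed.

Lemma amplB x y : ampl f (x - y) = ampl f x - ampl f y.
Proof. by rewrite amplD -scaleN1r amplZ scaleN1r. Qed.

Lemma mxform_ampl1 u :
  mxform (ampl f 1%:M) u u = \sum_i mxform (f 1%:M) (blockcv u i) (blockcv u i).
Proof.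
rewrite mxform_ampl; apply: eq_bigr => i _.
rewrite (bigD1 i) //= big1 => [|j /negPf ji]; last first.
  by rewrite blockmx1 eq_sym ji scale0r (clinear0 f_lin) mxform0x.
by rewrite blockmx1 eqxx scale1r addr0.
Qed.

Hypothesis f_pos : posmap f.

Lemma ampl_adj x : adjmx (ampl f x) = ampl f (adjmx x).
Proof.
apply/matrixP=> i j; case: (mxtens_indexP i) => i1 i2; case: (mxtens_indexP j) => j1 j2.
by rewrite adjmxE !amplE blockmx_adj (posmap_adj f_lin f_pos) adjmxE.
Qed.

Lemma ampl_selfadj x : selfadj x -> selfadj (ampl f x).
Proof. by rewrite /selfadj ampl_adj => ->. Qed.

Lemma ampl1_psd : psd (ampl f (1%:M : 'M[C]_(n * m))).
Proof.
split=> [|u]; first exact/ampl_selfadj/selfadj1.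
rewrite -/(mxform _ u u) mxform_ampl1 sumr_ge0 // => i _.
exact: psd_mxform_ge0 _ (posmap_psd1 f_pos).
Qed.

End LinearAmpliation.

Lemma ampl_order_unit x : selfadj x -> exists l : R,
  forall f, clinear f -> posmap f -> psd (ampl f (l%:C *: 1%:M - x)).
Proof.
move=> sx.
have /fin_all_exists[c cP] := fun ij : 'I_n * 'I_n =>
  posmap_mxform_bound_uniform (blockmx x ij.1 ij.2).
(* |<u_i, f x_ij u_j>| <= c_ij (a_i + a_j) <= 2 c_ij (a_1 + ... + a_n) *)
pose S := \sum_i \sum_j c (i, j).
have c0 i j : 0 <= c (i, j) by case: (cP (i, j)).
exists (S *+ 2) => f f_lin f_pos; split=> [|u].
  by apply/ampl_selfadj/selfadjB => //; apply/selfadjZ/selfadj1.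
rewrite -/(mxform _ u u) amplB // amplZ // mxformBx mxformZx mxform_ampl1 //.
set a := fun i => mxform (f 1%:M) (blockcv u i) (blockcv u i).
have a0 i : 0 <= a i := psd_mxform_ge0 _ (posmap_psd1 f_pos).
have a_le i j : a i + a j <= (\sum_k a k) *+ 2.
  by rewrite mulr2n lerD // ler_sum_term.
have Br : mxform (ampl f x) u u \is Num.real.
  exact/selfadj_mxform_real/ampl_selfadj.
rewrite subr_ge0; apply: le_trans (real_ler_norm Br) _.
rewrite mxform_ampl; apply: le_trans (ler_norm_sum _ _ _) _.
rewrite rmorphMn mulrnAl -mulrnAr /S rmorph_sum mulr_suml.
apply: ler_sum => i _; apply: le_trans (ler_norm_sum _ _ _) _.
rewrite rmorph_sum mulr_suml; apply: ler_sum => j _.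
have [_ bound] := cP (i, j); apply: le_trans (bound f f_lin f_pos _ _) _.
by rewrite ler_wpM2l ?ler0c //; exact: a_le.
Qed.

End Ampliation.

Section TensorCone.
Variable R : realType.
Local Notation C := R[i].
Variables n m : nat.
Local Notation V := 'M[C]_(n * m).
Variable Cn : ('M[C]_m -> 'M[C]_m) -> Prop.
Hypothesis Cn_pos : forall alpha, Cn alpha -> clinear alpha /\ posmap alpha.
Local Notation P := (@in_PAC R n m Cn).

Lemma in_PAC0 : P 0.
Proof.
split=> [|f /Cn_pos[f_lin _]]; first exact: selfadj0.
by rewrite -(scale0r 0) amplZ // scale0r; apply: psd0.
Qed.

Lemma in_PACD x y : P x -> P y -> P (x + y).
Proof.
move=> [sx Px] [sy Py]; split=> [|f Cf]; first exact: selfadjD.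
by have [f_lin _] := Cn_pos Cf; rewrite amplD //; apply: psdD; [apply: Px | apply: Py].
Qed.

Lemma in_PACZ (t : R) x : 0 <= t -> P x -> P (t%:C *: x).
Proof.
move=> t0 [sx Px]; split=> [|f Cf]; first exact: selfadjZ.
by have [f_lin _] := Cn_pos Cf; rewrite amplZ //; apply: psdZ => //; apply: Px.
Qed.

Lemma in_PAC1 : P 1%:M.
Proof.
split=> [|f /Cn_pos[f_lin f_pos]]; first exact: selfadj1.
exact: ampl1_psd.
Qed.

Lemma in_PAC_order_unit x : selfadj x -> exists l : R, P (l%:C *: 1%:M - x).
Proof.
move=> sx; have [l lP] := ampl_order_unit sx; exists l.
split=> [|f /Cn_pos[f_lin f_pos]]; last exact: lP.
by apply: selfadjB => //; apply/selfadjZ/selfadj1.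
Qed.

(* P(A, C) consists of self-adjoint elements; its pull-back along [hpart] is a cone in
   the whole space, with the same order unit. *)
Definition in_PACh (x : V) := P (hpart x).

Lemma in_PAChD x y : in_PACh x -> in_PACh y -> in_PACh (x + y).
Proof. by rewrite /in_PACh hpartD; apply: in_PACD. Qed.

Lemma in_PAChZ (t : R) x : 0 <= t -> in_PACh x -> in_PACh (t%:C *: x).
Proof. by rewrite /in_PACh hpartZ; apply: in_PACZ. Qed.

Lemma in_PACh_order_unit x : exists l : R, in_PACh (l%:C *: 1%:M - x).
Proof.
have [l lP] := in_PAC_order_unit (hpart_selfadj x); exists l.
by rewrite /in_PACh hpartB hpartZ (hpart_id (selfadj1 _ _)).
Qed.

End TensorCone.

Section DualFunctional.
Variable R : realType.
Local Notation C := R[i].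
Variables n m : nat.
Local Notation V := 'M[C]_(n * m).
Variables (A : 'M[C]_n -> Prop) (Cn : ('M[C]_m -> 'M[C]_m) -> Prop).
Variable phi : 'M[C]_n -> 'M[C]_m.
Hypothesis Cn_pos : forall alpha, Cn alpha -> clinear alpha /\ posmap alpha.
Hypothesis phi_pos : Cpositive A Cn phi.
Implicit Types (s : seq ('M[C]_n * 'M[C]_m)) (x y : V).

Definition tens_sum s : V := \sum_(ab <- s) ab.1 *t ab.2.

Definition dual_sum s : C := \sum_(ab <- s) \tr (phi ab.1 *m ab.2^T).

Definition tens_rep x s := {in s, forall ab, A ab.1} /\ x = tens_sum s.

Definition in_tens x := exists s, tens_rep x s.

Lemma dual_sum_ge0 x s : tens_rep x s -> in_PAC Cn x -> 0 <= dual_sum s.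
Proof.
move=> [sA ->]; pose ab0 := (0 : 'M[C]_n, 0 : 'M[C]_m).
rewrite /tens_sum /dual_sum !(big_nth ab0) !big_mkord; apply: phi_pos => i.
by apply: sA; rewrite mem_nth.
Qed.

Lemma tens_sum_cat s1 s2 : tens_sum (s1 ++ s2) = tens_sum s1 + tens_sum s2.
Proof. exact: big_cat. Qed.

Lemma dual_sum_cat s1 s2 : dual_sum (s1 ++ s2) = dual_sum s1 + dual_sum s2.
Proof. exact: big_cat. Qed.

Lemma tens_rep_cat x y s1 s2 : tens_rep x s1 -> tens_rep y s2 -> tens_rep (x + y) (s1 ++ s2).
Proof.
move=> [A1 ->] [A2 ->]; split; last by rewrite tens_sum_cat.
by move=> ab; rewrite mem_cat => /orP[/A1|/A2].
Qed.

Definition tens_scale (c : C) s := [seq (ab.1, c *: ab.2) | ab <- s].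

Lemma tens_rep_scale c x s : tens_rep x s -> tens_rep (c *: x) (tens_scale c s).
Proof.
move=> [sA ->]; split=> [_ /mapP[ab abs ->]|]; first exact: (sA _ abs).
by rewrite /tens_sum big_map scaler_sumr; apply: eq_bigr => ab _; rewrite tensmxZr.
Qed.

Lemma dual_sum_scale c s : dual_sum (tens_scale c s) = c * dual_sum s.
Proof.
rewrite /dual_sum big_map mulr_sumr; apply: eq_bigr => ab _.
by rewrite linearZ -scalemxAr linearZ.
Qed.

(* [s1 ++ tens_scale (-1) s2] represents 0, which lies in P(A, C); hence
   [dual_sum s1 - dual_sum s2 >= 0], and symmetrically. *)
Lemma dual_sum_uniq x s1 s2 : tens_rep x s1 -> tens_rep x s2 -> dual_sum s1 = dual_sum s2.
Proof.
have le x' s s' : tens_rep x' s -> tens_rep x' s' -> dual_sum s' <= dual_sum s.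
  move=> xs xs'; rewrite -subr_ge0 -mulN1r -dual_sum_scale -dual_sum_cat.
  apply: dual_sum_ge0 (tens_rep_cat xs (tens_rep_scale (-1) xs')) _.
  by rewrite scaleN1r subrr; apply: in_PAC0.
by move=> xs1 xs2; apply/le_anti; rewrite (le _ _ _ xs1 xs2) (le _ _ _ xs2 xs1).
Qed.

(* Outside [in_tens] this is the junk value [dual_sum [::] = 0]. *)
Definition dual_fun x : C := dual_sum (epsilon (inhabits [::]) (tens_rep x)).

Lemma dual_funE x s : tens_rep x s -> dual_fun x = dual_sum s.
Proof.
move=> xs; apply: (dual_sum_uniq _ xs).
exact: (epsilon_spec (inhabits [::]) (tens_rep x) (ex_intro _ s xs)).
Qed.

Lemma in_tensD x y : in_tens x -> in_tens y -> in_tens (x + y).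
Proof. by move=> [s1 xs1] [s2 ys2]; exists (s1 ++ s2); apply: tens_rep_cat. Qed.

Lemma in_tensZ c x : in_tens x -> in_tens (c *: x).
Proof. by move=> [s xs]; exists (tens_scale c s); apply: tens_rep_scale. Qed.

Lemma dual_funD x y : in_tens x -> in_tens y -> dual_fun (x + y) = dual_fun x + dual_fun y.
Proof.
move=> [s1 xs1] [s2 ys2].
by rewrite (dual_funE xs1) (dual_funE ys2) (dual_funE (tens_rep_cat xs1 ys2)) dual_sum_cat.
Qed.

Lemma dual_funZ c x : in_tens x -> dual_fun (c *: x) = c * dual_fun x.
Proof.
by move=> [s xs]; rewrite (dual_funE xs) (dual_funE (tens_rep_scale c xs)) dual_sum_scale.
Qed.

Lemma dual_fun_ge0 x : in_tens x -> in_PAC Cn x -> 0 <= dual_fun x.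
Proof. by move=> [s xs] Px; rewrite (dual_funE xs); apply: dual_sum_ge0 xs Px. Qed.

Hypothesis A_selfadj : forall a, A a -> selfadj a.
Hypothesis A1 : A 1%:M.

Lemma in_tens1 : in_tens 1%:M.
Proof.
exists [:: (1%:M, 1%:M)]; split=> [ab|]; first by rewrite inE => /eqP ->.
by rewrite /tens_sum big_seq1 tensmx11.
Qed.

Lemma in_tens_adj x : in_tens x -> in_tens (adjmx x).
Proof.
move=> [s [sA ->]]; exists [seq (ab.1, adjmx ab.2) | ab <- s].
split=> [_ /mapP[ab abs ->]|]; first exact: (sA _ abs).
rewrite /tens_sum big_map adjmx_sum; apply: eq_big_seq => ab abs.
by rewrite adjmx_tens (A_selfadj (sA _ abs)).
Qed.

Lemma in_tens_hpart x : in_tens x -> in_tens (hpart x).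
Proof. by move=> xT; apply/in_tensZ/in_tensD/in_tens_adj. Qed.

Lemma dual_fun_real x : in_tens x -> selfadj x -> dual_fun x \is Num.real.
Proof.
move=> xT sx; have [l Pl] := in_PAC_order_unit Cn_pos (selfadjN sx); rewrite opprK in Pl.
have lT : in_tens (l%:C *: 1%:M) by apply/in_tensZ/in_tens1.
have -> : dual_fun x = dual_fun (l%:C *: 1%:M + x) - l%:C * dual_fun 1%:M.
  rewrite dual_funD // dual_funZ; last exact: in_tens1.
  by rewrite addrAC subrr add0r.
rewrite rpredB ?rpredM ?complex_real //; apply: ger0_real; apply: dual_fun_ge0 => //.
  exact: in_tensD.
exact: in_tens1.
exact: in_PAC1.
Qed.

Lemma pos_functional_dual :
  pos_functional (in_PACh Cn) 1%:M in_tens (fun x => complex.Re (dual_fun x)).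
Proof.
split.
- exact: in_tens1.
- exact: in_tensD.
- by move=> t x; apply: in_tensZ.
- by move=> x y xT yT; rewrite dual_funD // raddfD.
- by move=> t x xT; rewrite dual_funZ //; case: (dual_fun x) => a b /=; rewrite mul0r subr0.
- move=> x xT Px; have hT := in_tens_hpart xT.
  have hT' := in_tens_hpart (in_tensZ (- 'i) xT).
  have h0 := dual_fun_ge0 hT Px.
  have h'r := dual_fun_real hT' (hpart_selfadj (- 'i *: x)).
  rewrite [x in dual_fun x]hpart_decomp.
  move: (hpart x) (hpart (- 'i *: x)) hT hT' h0 h'r => h h' hT hT' + +.
  rewrite dual_funD ?dual_funZ //; last exact: in_tensZ.
  case: (dual_fun h) => a b; case: (dual_fun h') => c d.
  rewrite complex_real lecE /= => /andP[_ a0] /eqP ->.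
  by rewrite mul0r mulr0 subr0 addr0.
Qed.

End DualFunctional.

Section Complexification.
Variable R : realType.
Local Notation C := R[i].
Variables p q : nat.
Variable g : 'M[C]_(p, q) -> R.
Hypothesis gD : forall x y, g (x + y) = g x + g y.
Hypothesis gZ : forall (t : R) x, g (t%:C *: x) = t * g x.

Definition complexify (x : 'M[C]_(p, q)) : C := Complex (g x) (- g ('i *: x)).

Lemma complexifyD x y : complexify (x + y) = complexify x + complexify y.
Proof. by rewrite /complexify scalerDr !gD; apply/eqP; rewrite eq_complex /= opprD !eqxx. Qed.

Lemma complexifyZ c x : complexify (c *: x) = c * complexify x.
Proof.
have gC d y : g (d *: y) = complex.Re d * g y + complex.Im d * g ('i *: y).
  by rewrite {1}[d]complexE scalerDl ['i%C * _]mulrC -scalerA gD !gZ.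
rewrite /complexify scalerA gC (gC _ x); case: c => a b.
by apply/eqP; rewrite eq_complex /= (gC ('i * _)) /=; apply/andP; split; apply/eqP; ring.
Qed.

End Complexification.

Lemma Complex_ReNRei (R : realType) (z : R[i]) :
  Complex (complex.Re z) (- complex.Re ('i * z)) = z.
Proof. by case: z => a b /=; rewrite mul0r mul1r sub0r opprK. Qed.

Section DualMap.
Variable R : realType.
Local Notation C := R[i].
Variables n m : nat.
Variable f : 'M[C]_(n * m) -> C.
Hypothesis fD : forall x y, f (x + y) = f x + f y.
Hypothesis fZ : forall c x, f (c *: x) = c * f x.

Definition dual_map (a : 'M[C]_n) : 'M[C]_m := \matrix_(p, q) f (a *t delta_mx p q).

Lemma dual_map_clinear : clinear dual_map.
Proof. by move=> c a a'; apply/matrixP=> i j; rewrite !mxE tensmxDl tensmxZl fD fZ. Qed.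

Lemma functional_sum I (r : seq I) (P : pred I) (F : I -> 'M[C]_(n * m)) :
  f (\sum_(i <- r | P i) F i) = \sum_(i <- r | P i) f (F i).
Proof.
have f0 : f 0 = 0 by rewrite -(scale0r 0) fZ mul0r.
exact: (big_morph _ fD f0).
Qed.

Lemma trace_dual_map a b : \tr (dual_map a *m b^T) = f (a *t b).
Proof.
rewrite tensmx_delta functional_sum /mxtrace; apply: eq_bigr => i _.
rewrite functional_sum mxE; apply: eq_bigr => j _.
by rewrite fZ !mxE mulrC.
Qed.

End DualMap.

Section Extension.
Variable R : realType.
Local Notation C := R[i].
Variables n m : nat.
Local Notation V := 'M[C]_(n * m).
Variables (A : 'M[C]_n -> Prop) (Cn : ('M[C]_m -> 'M[C]_m) -> Prop).
Variable phi : 'M[C]_n -> 'M[C]_m.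
Hypothesis Cn_pos : forall alpha, Cn alpha -> clinear alpha /\ posmap alpha.

Lemma complexify_ge0 (g : V -> R) x :
  (forall x y, g (x + y) = g x + g y) -> (forall (t : R) x, g (t%:C *: x) = t * g x) ->
  (forall x, in_PACh Cn x -> 0 <= g x) -> in_PAC Cn x -> 0 <= complexify g x.
Proof.
move=> gD gZ g_ge0 Px; have [sx _] := Px.
have gN y : g (- y) = - g y by rewrite -scaleN1r -(rmorphN1 (real_complex R)) gZ mulN1r.
have Pix (y : V) : selfadj y -> in_PACh Cn ('i *: y).
  by move=> sy; rewrite /in_PACh hpart_iZ //; apply: in_PAC0.
have := g_ge0 _ (Pix _ sx); have := g_ge0 _ (Pix _ (selfadjN sx)).
rewrite scalerN gN oppr_ge0 => gix_le0 gix_ge0.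
have gix0 : g ('i *: x) = 0 by apply/le_anti; rewrite gix_le0 gix_ge0.
by rewrite /complexify gix0 lecE /= oppr0 eqxx g_ge0 // /in_PACh hpart_id.
Qed.

Lemma Cpositive_dual_map (f : V -> C) :
  (forall x y, f (x + y) = f x + f y) -> (forall c x, f (c *: x) = c * f x) ->
  (forall x, in_PAC Cn x -> 0 <= f x) -> Cpositive (fun _ => True) Cn (dual_map f).
Proof.
move=> fD fZ f_ge0 k a b _ Px; rewrite (eq_bigr (fun i => f (a i *t b i))) => [|i _].
  by rewrite -functional_sum //; apply: f_ge0.
exact: trace_dual_map.
Qed.

Hypothesis phi_pos : Cpositive A Cn phi.

Lemma dual_map_dual_fun (f : V -> C) a : (forall x, in_tens A x -> f x = dual_fun A phi x) ->
  A a -> dual_map f a = phi a.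
Proof.
move=> f_ext Aa; apply/matrixP=> i j.
have rep : tens_rep A (a *t delta_mx i j) [:: (a, delta_mx i j)].
  by split=> [ab|]; [rewrite inE => /eqP -> | rewrite /tens_sum big_seq1].
rewrite mxE f_ext; last by exists [:: (a, delta_mx i j)].
by rewrite (dual_funE Cn_pos phi_pos rep) /dual_sum big_seq1 trace_mulmx_delta.
Qed.

End Extension.

Unset Implicit Arguments.

Theorem theorem1 (R : realType) (n m : nat)
    (A : 'M[R[i]]_n -> Prop) (Cn : ('M[R[i]]_m -> 'M[R[i]]_m) -> Prop)
    (phi : 'M[R[i]]_n -> 'M[R[i]]_m) :
  real_opsys A -> mapping_cone Cn ->
  rlinear_on A phi -> Cpositive A Cn phi ->
  exists psi : 'M[R[i]]_n -> 'M[R[i]]_m,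
    [/\ clinear psi,
        Cpositive (fun _ => True) Cn psi &
        forall a, A a -> psi a = phi a].
Proof.
move=> [A_sa A1 _ _] [Cn_pos _ _ _ _] _ phi_pos.
have [g [g_ext gD gZ g_ge0]] := krein_extension (@in_PAChD R n m Cn Cn_pos)
  (in_PAChZ Cn_pos) (in_PACh_order_unit Cn_pos) (pos_functional_dual Cn_pos phi_pos A_sa A1).
have fD := complexifyD gD; have fZ := complexifyZ gD gZ.
exists (dual_map (complexify g)); split.
- exact: dual_map_clinear.
- by apply: Cpositive_dual_map => // x; apply: complexify_ge0.
- move=> a; apply: (dual_map_dual_fun Cn_pos phi_pos) => x xT.
  rewrite /complexify !g_ext ?(dual_funZ Cn_pos phi_pos) ?Complex_ReNRei //.
  exact: in_tensZ.
Qed.
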